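(* For all terms $M,M'$ and every substitution $\sigma$: if $M\sim_\alpha M'$ then $M\bullet\sigma\equiv M'\bullet\sigma$.
   Context: Let $\mathcal V$ (the variables) be a type with decidable equality, equipped with functions $\mathrm{encode}:\mathcal V\to\mathbb N$ and $\mathrm{decode}:\mathbb N\to\mathcal V$ such that $\mathrm{encode}(\mathrm{decode}\,n)=n$ for all $n$. Let $\mathcal C$ (the constants) be any type. Terms $\Lambda$ are generated by: $c\,k$ ($k\in\mathcal C$), $v\,x$ ($x\in\mathcal V$), $\lambda[x:A]M$, $\Pi[x:A]B$ and $M\cdot N$; in $\lambda[x:A]M$ and $\Pi[x:A]B$ the name $x$ binds in $M$ (resp. $B$) but not in $A$. Terms are raw first-order syntax (not identified up to renaming of bound variables) and $\equiv$ denotes syntactic identity. The list of free variables is $\mathrm{fv}(c\,k)=[\,]$, $\mathrm{fv}(v\,x)=[x]$, $\mathrm{fv}(\lambda[x:A]M)=\mathrm{fv}\,A\mathbin{+\!\!+}(\mathrm{fv}\,M-x)$, $\mathrm{fv}(\Pi[x:A]B)=\mathrm{fv}\,A\mathbin{+\!\!+}(\mathrm{fv}\,B-x)$, $\mathrm{fv}(M\cdot N)=\mathrm{fv}\,M\mathbin{+\!\!+}\mathrm{fv}\,N$, where $\mathbin{+\!\!+}$ is list concatenation and $xs-x$ deletes every occurrence of $x$ from $xs$. Fix a function $\chi':\mathrm{List}\,\mathbb N\to\mathbb N$ with $\chi'(ns)\notin ns$ for every list $ns$, and put $X'(xs)=\mathrm{decode}(\chi'(\mathrm{map}\ \mathrm{encode}\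 xs))$. A substitution is any function $\sigma:\mathcal V\to\Lambda$; $\iota=v$ is the identity substitution; $(\sigma,x:=N)(y)=N$ if $y=x$ and $\sigma\,y$ otherwise. For a substitution $\sigma$ and a list $xs$ of variables, $X(\sigma,xs)=X'(\text{concatenation of the lists }\mathrm{fv}(\sigma\,y)\text{ for }y\in xs)$. The action $M\bullet\sigma$ is defined by structural recursion: $c\,k\bullet\sigma=c\,k$; $v\,x\bullet\sigma=\sigma\,x$; $(M\cdot N)\bullet\sigma=(M\bullet\sigma)\cdot(N\bullet\sigma)$; $(\lambda[x:A]M)\bullet\sigma=\lambda[y:A\bullet\sigma](M\bullet(\sigma,x:=v\,y))$ with $y=X(\sigma,\mathrm{fv}\,M-x)$; $(\Pi[x:A]B)\bullet\sigma=\Pi[y:A\bullet\sigma](B\bullet(\sigma,x:=v\,y))$ with $y=X(\sigma,\mathrm{fv}\,B-x)$. Unary substitution is $M[x:=N]=M\bullet(\iota,x:=N)$. $\alpha$-conversion $\sim_\alpha$ is the inductively defined relation with rules: $c\,k\sim_\alpha c\,k$; $v\,x\sim_\alpha v\,x$; $M\cdot N\sim_\alpha M'\cdot N'$ if $M\sim_\alpha M'$ and $N\sim_\alpha N'$; $\lambda[x:A]M\sim_\alpha\lambda[x':A']M'$ if $A\sim_\alpha A'$ and there is a variable $y$ with $y\notin\mathrm{fv}\,M-x$, $y\notin\mathrm{fv}\,M'-x'$ and $M[x:=v\,y]\equiv M'[x':=v\,y]$; and the same rule with $\Pi$ in place of $\lambda$. *)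

From Stdlib Require Import List Arith.
Import ListNotations.
Set Implicit Arguments.

Section Lambda.
Variables (V C : Type).
Variable eqdec : forall x y : V, {x = y} + {x <> y}.
Variables (encode : V -> nat) (decode : nat -> V).
Variable chi' : list nat -> nat.

Inductive term : Type :=
| tc : C -> term
| tv : V -> term
| tlam : V -> term -> term -> term   (* tlam x A M = \lambda[x:A] M *)
| tpi  : V -> term -> term -> term   (* tpi x A B = \Pi[x:A] B *)
| tapp : term -> term -> term.

Definition ldel (xs : list V) (x : V) : list V :=
  filter (fun y => if eqdec y x then false else true) xs.

Fixpoint fv (t : term) : list V :=
  match t with
  | tc _ => []
  | tv x => [x]
  | tlam x A M => fv A ++ ldel (fv M) x
  | tpi x A B => fv A ++ ldel (fv B) x
  | tapp M N => fv M ++ fv N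
  end.

Definition X' (xs : list V) : V := decode (chi' (map encode xs)).

Definition subst := V -> term.

Definition iota : subst := tv.

Definition upd (s : subst) (x : V) (N : term) : subst :=
  fun y => if eqdec y x then N else s y.

Definition Xs (s : subst) (xs : list V) : V :=
  X' (flat_map (fun y => fv (s y)) xs).

Fixpoint act (t : term) (s : subst) : term :=
  match t with
  | tc k => tc k
  | tv x => s x
  | tapp M N => tapp (act M s) (act N s)
  | tlam x A M =>
      let y := Xs s (ldel (fv M) x) in
      tlam y (act A s) (act M (upd s x (tv y)))
  | tpi x A B =>
      let y := Xs s (ldel (fv B) x) in
      tpi y (act A s) (act B (upd s x (tv y)))
  end.

Definition usubst (M : term) (x : V) (N : term) : term := act M (upd iota x N).

Inductive alpha : term -> term -> Prop :=
| alpha_c : forall k, alpha (tc k) (tc k)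
| alpha_v : forall x, alpha (tv x) (tv x)
| alpha_app : forall M N M' N', alpha M M' -> alpha N N' ->
    alpha (tapp M N) (tapp M' N')
| alpha_lam : forall x A M x' A' M' y, alpha A A' ->
    ~ In y (ldel (fv M) x) -> ~ In y (ldel (fv M') x') ->
    usubst M x (tv y) = usubst M' x' (tv y) ->
    alpha (tlam x A M) (tlam x' A' M')
| alpha_pi : forall x A B x' A' B' y, alpha A A' ->
    ~ In y (ldel (fv B) x) -> ~ In y (ldel (fv B') x') ->
    usubst B x (tv y) = usubst B' x' (tv y) ->
    alpha (tpi x A B) (tpi x' A' B').

End Lambda.

(* The action renames every binder to [Xs s (fv M - x)], a name computed from the free
   variables of the binder body only, so alpha-equivalent binders receive the same new name.
   The action depends only on the substitution at free variables, its free variables are those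
   of the substituted free variables, and it composes.  Hence, for [y] fresh in [λx.M],
   [fv (M[x:=y]) - y = fv M - x] and [M•(σ,x:=z) = M[x:=y]•(σ,y:=z)]: the two sides of an
   alpha step choose the same bound name and act identically on their bodies. *)
From Pilot Require Import Defs.
From Stdlib Require Import List.

Local Arguments Defs.ldel : simpl never.

Lemma flat_map_ext_in (A B : Type) (f g : A -> list B) (l : list A) :
  (forall a, In a l -> f a = g a) -> flat_map f l = flat_map g l.
Proof.
  intro Hfg. rewrite !flat_map_concat_map. f_equal. now apply map_ext_in.
Qed.

Lemma flat_map_flat_map (A B D : Type) (f : B -> list D) (g : A -> list B) (l : list A) :
  flat_map f (flat_map g l) = flat_map (fun a => flat_map f (g a)) l.
Proof. induction l as [|a l IH]; simpl; [reflexivity|]. now rewrite flat_map_app, IH. Qed.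

Section Alpha.
Variables (V C : Type).
Variable eqdec : forall x y : V, {x = y} + {x <> y}.
Variables (encode : V -> nat) (decode : nat -> V).
Hypothesis encodeK : forall n, encode (decode n) = n.
Variable chi' : list nat -> nat.
Hypothesis chi'_fresh : forall ns, ~ In (chi' ns) ns.

Local Notation term := (term V C).
Local Notation tv := (tv C).
Local Notation iota := (iota C).
Local Notation fv := (fv eqdec (C:=C)).
Local Notation ldel := (ldel eqdec).
Local Notation upd := (upd eqdec (C:=C)).
Local Notation X' := (X' encode decode chi').
Local Notation Xs := (Xs eqdec encode decode chi' (C:=C)).
Local Notation act := (act eqdec encode decode chi').
Local Notation usubst := (usubst eqdec encode decode chi').

Lemma upd_same (s : subst V C) x N : upd s x N x = N.
Proof. unfold Defs.upd. now destruct (eqdec x x). Qed.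

Lemma upd_other (s : subst V C) x N y : y <> x -> upd s x N y = s y.
Proof. intro Hyx. unfold Defs.upd. now destruct (eqdec y x). Qed.

Lemma in_ldel w l x : In w (ldel l x) <-> In w l /\ w <> x.
Proof. unfold Defs.ldel. rewrite filter_In. destruct (eqdec w x); intuition congruence. Qed.

Lemma ldel_cons_same a l : ldel (a :: l) a = ldel l a.
Proof. unfold Defs.ldel; simpl. now destruct (eqdec a a). Qed.

Lemma ldel_cons_other a l x : a <> x -> ldel (a :: l) x = a :: ldel l x.
Proof. intro Hax. unfold Defs.ldel; simpl. now destruct (eqdec a x). Qed.

Lemma ldel_app l1 l2 x : ldel (l1 ++ l2) x = ldel l1 x ++ ldel l2 x.
Proof. apply filter_app. Qed.

Lemma ldel_notin l x : ~ In x l -> ldel l x = l.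
Proof.
  induction l as [|a l IH]; intro Hx; [reflexivity|].
  rewrite ldel_cons_other by (intros ->; apply Hx; now left).
  rewrite IH; [reflexivity|]. intro; apply Hx; now right.
Qed.

Lemma X'_fresh L : ~ In (X' L) L.
Proof.
  intro HL. apply (chi'_fresh (map encode L)).
  rewrite <- (encodeK (chi' (map encode L))). now apply in_map.
Qed.

Lemma Xs_fresh (s : subst V C) L w : In w L -> ~ In (Xs s L) (fv (s w)).
Proof.
  intros Hw Hin. apply (X'_fresh (flat_map (fun y => fv (s y)) L)).
  apply in_flat_map. eauto.
Qed.

Lemma Xs_ext (s t : subst V C) L : (forall w, In w L -> s w = t w) -> Xs s L = Xs t L.
Proof.
  intro Hst. unfold Defs.Xs. f_equal. apply flat_map_ext_in. intros w Hw. now rewrite Hst.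
Qed.

Lemma upd_ext_ldel (s t : subst V C) x N l :
  (forall w, In w (ldel l x) -> s w = t w) -> forall w, In w l -> upd s x N w = upd t x N w.
Proof.
  intros Hst w Hw. destruct (eqdec w x) as [->|Hwx].
  - now rewrite !upd_same.
  - rewrite !upd_other by exact Hwx. apply Hst, in_ldel. now split.
Qed.

Lemma act_ext M : forall s t : subst V C,
  (forall w, In w (fv M) -> s w = t w) -> act M s = act M t.
Proof.
  induction M as [k|x|x A IHA M IHM|x A IHA M IHM|M IHM N IHN]; intros s t Hst; simpl in *.
  1: reflexivity.
  1: apply Hst; now left.
  3: now rewrite (IHM s t), (IHN s t) by (intros; apply Hst, in_or_app; auto).
  all: rewrite (Xs_ext s t) by (intros; apply Hst, in_or_app; auto);
       rewrite (IHA s t) by (intros; apply Hst, in_or_app; auto);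
       f_equal; apply IHM, upd_ext_ldel; intros; apply Hst, in_or_app; auto.
Qed.

(* The free variables of [l•(s, x:=z)] with [z] removed: the freshness hypothesis is what
   [Xs] guarantees for the bound name it picks. *)
Lemma ldel_fv_upd (s : subst V C) x z l :
  (forall w, In w l -> w <> x -> ~ In z (fv (s w))) ->
  ldel (flat_map (fun y => fv (upd s x (tv z) y)) l) z
  = flat_map (fun y => fv (s y)) (ldel l x).
Proof.
  induction l as [|a l IH]; intro Hz; simpl; [reflexivity|].
  rewrite ldel_app. destruct (eqdec a x) as [->|Hax].
  - rewrite upd_same, ldel_cons_same. simpl. rewrite ldel_cons_same. simpl.
    apply IH. intros; apply Hz; simpl; auto.
  - rewrite upd_other, ldel_cons_other, ldel_notin by (auto; apply Hz; simpl; auto).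
    simpl. f_equal. apply IH. intros; apply Hz; simpl; auto.
Qed.

Lemma fv_act M : forall s : subst V C, fv (act M s) = flat_map (fun y => fv (s y)) (fv M).
Proof.
  induction M as [k|x|x A IHA M IHM|x A IHA M IHM|M IHM N IHN]; intro s; simpl.
  1: reflexivity.
  1: symmetry; apply app_nil_r.
  3: now rewrite flat_map_app, IHM, IHN.
  all: rewrite flat_map_app, IHA, IHM; f_equal; apply ldel_fv_upd;
       intros; apply Xs_fresh, in_ldel; now split.
Qed.

Definition scomp (s t : subst V C) : subst V C := fun y => act (s y) t.

Lemma Xs_act (s t : subst V C) L :
  Xs t (flat_map (fun y => fv (s y)) L) = Xs (scomp s t) L.
Proof.
  unfold Defs.Xs, scomp. f_equal. rewrite flat_map_flat_map.
  apply flat_map_ext_in. intros. now rewrite fv_act.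
Qed.

Lemma act_comp M : forall s t : subst V C, act (act M s) t = act M (scomp s t).
Proof.
  induction M as [k|x|x A IHA M IHM|x A IHA M IHM|M IHM N IHN]; intros s t; simpl.
  1,2: reflexivity.
  3: now rewrite IHM, IHN.
  all: rewrite fv_act, ldel_fv_upd
         by (intros; apply Xs_fresh, in_ldel; now split);
       rewrite IHA, Xs_act, IHM; f_equal; apply act_ext; intros w Hw; unfold scomp;
       destruct (eqdec w x) as [->|Hwx];
       [ now rewrite !upd_same; simpl; rewrite upd_same
       | rewrite !upd_other by exact Hwx; apply act_ext; intros v Hv;
         apply upd_other; intros ->; revert Hv; apply Xs_fresh, in_ldel; now split ].
Qed.

Lemma fv_tv_flat_map (l : list V) : flat_map (fun y => fv (iota y)) l = l.
Proof. induction l as [|a l IH]; cbn [flat_map]; [reflexivity|]. now rewrite IH. Qed.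

Lemma ldel_fv_rename M x y :
  ~ In y (ldel (fv M) x) -> ldel (fv (usubst M x (tv y))) y = ldel (fv M) x.
Proof.
  intro Hy. unfold Defs.usubst. rewrite fv_act, ldel_fv_upd, fv_tv_flat_map; [reflexivity|].
  intros w Hw Hwx [->|[]]. apply Hy, in_ldel. now split.
Qed.

Lemma act_rename M x y (s : subst V C) z :
  ~ In y (ldel (fv M) x) ->
  act M (upd s x (tv z)) = act (usubst M x (tv y)) (upd s y (tv z)).
Proof.
  intro Hy. unfold Defs.usubst. rewrite act_comp. apply act_ext. intros w Hw. unfold scomp.
  destruct (eqdec w x) as [->|Hwx].
  - rewrite !upd_same. simpl. now rewrite upd_same.
  - rewrite !upd_other by exact Hwx. simpl. symmetry. apply upd_other.
    intros ->. apply Hy, in_ldel. now split.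
Qed.

Lemma act_binder_alpha M M' x x' y (s : subst V C) :
  ~ In y (ldel (fv M) x) -> ~ In y (ldel (fv M') x') ->
  usubst M x (tv y) = usubst M' x' (tv y) ->
  let z := Xs s (ldel (fv M) x) in
  z = Xs s (ldel (fv M') x') /\ act M (upd s x (tv z)) = act M' (upd s x' (tv z)).
Proof.
  intros Hy Hy' Hren z. split.
  - unfold z. now rewrite <- (ldel_fv_rename M x y), <- (ldel_fv_rename M' x' y), Hren.
  - now rewrite (act_rename M x y), (act_rename M' x' y), Hren.
Qed.

Lemma act_alpha (M M' : term) :
  alpha eqdec encode decode chi' M M' -> forall s, act M s = act M' s.
Proof.
  induction 1 as [| |? ? ? ? _ IHM _ IHN|x A M x' A' M' y _ IHA Hy Hy' Hren
                 |x A M x' A' M' y _ IHA Hy Hy' Hren]; intro s; simpl.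
  1,2: reflexivity.
  1: now rewrite IHM, IHN.
  all: destruct (act_binder_alpha M M' x x' y s Hy Hy' Hren) as [Hz Hbody];
       now rewrite IHA, Hbody, Hz.
Qed.

End Alpha.

Theorem mainTheorem4 (V C : Type) (eqdec : forall x y : V, {x = y} + {x <> y})
  (encode : V -> nat) (decode : nat -> V)
  (Hcode : forall n, encode (decode n) = n)
  (chi' : list nat -> nat) (Hchi : forall ns, ~ In (chi' ns) ns)
  (M M' : term V C) (s : V -> term V C) :
  alpha eqdec encode decode chi' M M' ->
  act eqdec encode decode chi' M s = act eqdec encode decode chi' M' s.
Proof.
  intro Halpha. exact (@act_alpha V C eqdec encode decode Hcode chi' Hchi M M' Halpha s).
Qed.
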